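(* Let $m\ge 2$, $n\ge1$ be integers, let $\mathcal P=(p_{i_1 i_2\dots i_m})\in\mathbb R^{[m,n]}$ be a transition probability tensor with first-index flattening $R\in\mathbb R^{n\times n^{m-1}}$, let $v\in\mathbb R^n$ be a stochastic vector, and let $\alpha\in[0,1)$ satisfy $\alpha<\frac{1}{m-1}$. Define $f:\mathbb R^n\to\mathbb R^n$ by $f(\mathbf{x})=\alpha R(\mathbf{x}\otimes\cdots\otimes\mathbf{x})+(1-\alpha)v-\mathbf{x}$ (with $m-1$ Kronecker factors $\mathbf{x}$), with Jacobian $$J_f(\mathbf{x})=\alpha R\Big(I\otimes\mathbf{x}\otimes\cdots\otimes\mathbf{x}+\mathbf{x}\otimes I\otimes\mathbf{x}\otimes\cdots\otimes\mathbf{x}+\cdots+\mathbf{x}\otimes\cdots\otimes\mathbf{x}\otimes I\Big)-I.$$ Consider the Newton iteration with initial vector $\mathbf{x}_0=0$: $$\mathbf{x}_{k+1}=\mathbf{x}_k-J_f(\mathbf{x}_k)^{-1}f(\mathbf{x}_k),\quad k=0,1,2,\dots$$ Then this iteration converges to the unique solution $\mathbf{x}$ of the multilinear PageRank equation $\mathbf{x}=\alpha R(\mathbf{x}\otimes\cdots\otimes\mathbf{x})+(1-\alpha)v$ (i.e. $f(\mathbf{x})=0$).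
   Context: A transition probability tensor $\mathcal P\in\mathbb R^{[m,n]}$ (order $m$, each dimension $n$) satisfies $p_{i_1\dots i_m}\ge0$ and $\sum_{i_1=1}^n p_{i_1 i_2\dots i_m}=1$ for all $(i_2,\dots,i_m)$. A vector is stochastic if its entries are non-negative and sum to one. The flattening $R$ along the first index is the $n\times n^{m-1}$ matrix with $\big(R(y^{(2)}\otimes\cdots\otimes y^{(m)})\big)_i=\sum_{i_2,\dots,i_m=1}^n p_{i i_2\dots i_m}y^{(2)}_{i_2}\cdots y^{(m)}_{i_m}$ for all $y^{(j)}\in\mathbb R^n$. $I$ is the $n\times n$ identity, $\otimes$ the Kronecker product; in the Jacobian, each of the $m-1$ summands is a Kronecker product of $m-1$ factors with $I$ in exactly one position and $\mathbf{x}$ (as an $n\times1$ matrix) in the other $m-2$ positions. *)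

From HB Require Import structures.
From mathcomp Require Import all_boot all_order all_algebra.
From mathcomp Require Import all_classical all_reals all_analysis.
Set Implicit Arguments. Unset Strict Implicit. Unset Printing Implicit Defensive.
Import Order.TTheory GRing.Theory Num.Theory.
Local Open Scope ring_scope.

(* An order-m tensor P in R^[m,n] is represented as a function
   P : 'I_n -> {ffun 'I_m.-1 -> 'I_n} -> R with
   P i s = p_{i, s 0, s 1, ..., s (m-2)}  (i = first index). *)

Section Defs.
Variable R : realType.

Definition transition_tensor (n k : nat) (P : 'I_n -> {ffun 'I_k -> 'I_n} -> R) :=
  (forall i s, 0 <= P i s) /\ (forall s, \sum_(i < n) P i s = 1).

Definition stochastic (n : nat) (v : 'cV[R]_n) :=
  (forall i, 0 <= v i ord0) /\ \sum_(i < n) v i ord0 = 1.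

(* flattening R along the first index, applied to y^(2) (x) ... (x) y^(m):
   (R (ys 0 (x) ... (x) ys (k-1)))_i = sum_s P i s * prod_j (ys j)_(s j) *)
Definition flat_apply (n k : nat) (P : 'I_n -> {ffun 'I_k -> 'I_n} -> R)
  (ys : 'I_k -> 'cV[R]_n) : 'cV[R]_n :=
  \col_i \sum_(s : {ffun 'I_k -> 'I_n}) P i s * \prod_(j < k) ys j (s j) ord0.

Definition mlpr_f (n k : nat) (P : 'I_n -> {ffun 'I_k -> 'I_n} -> R)
  (alpha : R) (v x : 'cV[R]_n) : 'cV[R]_n :=
  alpha *: flat_apply P (fun _ => x) + (1 - alpha) *: v - x.

(* Jacobian: alpha R (sum_j x (x)..(x) I (x)..(x) x  [I at position j]) - I.
   Column l of R (x(x)..(x) I (x)..(x) x) is R (x(x)..(x) e_l (x)..(x) x). *)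
Definition mlpr_J (n k : nat) (P : 'I_n -> {ffun 'I_k -> 'I_n} -> R)
  (alpha : R) (x : 'cV[R]_n) : 'M[R]_n :=
  \matrix_(i, l) (alpha * \sum_(j < k)
      flat_apply P (fun j' => if j' == j then delta_mx l ord0 else x) i ord0)
  - 1%:M.

Fixpoint newton (n k : nat) (P : 'I_n -> {ffun 'I_k -> 'I_n} -> R)
  (alpha : R) (v : 'cV[R]_n) (t : nat) : 'cV[R]_n :=
  match t with
  | 0 => 0
  | t'.+1 => let xt := newton P alpha v t' in
             xt - invmx (mlpr_J P alpha xt) *m mlpr_f P alpha v xt
  end.

End Defs.

(* Write f(x) = g(x) - x with g(x) = alpha R(x (x) ... (x) x) + (1 - alpha) v and
   let G(x) be the Jacobian of g, so that J_f = G - I.  For x >= 0 with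
   sum x <= 1, G(x) is entrywise nonnegative with all column sums equal to
   alpha (m-1) (sum x)^(m-2) < 1; hence I - G(x) is inverse-positive
   ((I - G(x)) z >= 0 forces z >= 0) and J_f(x) is invertible.  Since g has
   nonnegative coefficients, g(y) >= g(x) + G(x)(y - x) whenever 0 <= x <= y.
   These two facts keep the Newton iterates from 0 in the region
   {x >= 0, sum x <= 1, f(x) >= 0}, make them increase, and keep them below
   every nonnegative root.  Their limit x* is a root because
   0 <= f(x_t) <= x_(t+1) - x_t, and s = sum x* satisfies
   1 - s = alpha (1 - s^(m-1)) <= alpha (m-1) (1 - s), which forces s = 1 as
   alpha (m-1) < 1.  A stochastic root dominates x* and has the same sum, so
   it equals x*. *)

From HB Require Import structures.
From mathcomp Require Import all_boot all_order all_algebra.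
From mathcomp Require Import all_classical all_reals all_analysis.
From mathcomp Require Import lra.
Import Order.TTheory GRing.Theory Num.Theory.
Import numFieldNormedType.Exports.

Set Implicit Arguments.
Unset Strict Implicit.
Unset Printing Implicit Defensive.
Local Open Scope classical_set_scope.
Local Open Scope ring_scope.

Section PowerBounds.
Variable R : realDomainType.
Implicit Types s : R.

Lemma one_subX s k : 1 - s ^+ k = (1 - s) * \sum_(i < k) s ^+ i.
Proof. by rewrite -opprB subrX1 -mulNr opprB. Qed.

Lemma one_subX_ge s k : 0 <= s -> s <= 1 ->
  k%:R * s ^+ k.-1 * (1 - s) <= 1 - s ^+ k.
Proof.
move=> s0 s1; rewrite one_subX mulrC ler_wpM2l ?subr_ge0 //.
rewrite mulr_natl -{2}(card_ord k) -sumr_const; apply: ler_sum => i _.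
by apply: ler_wiXn2l => //; rewrite -ltnS prednK ?(leq_trans _ (ltn_ord i)).
Qed.

Lemma one_subX_le s k : 0 <= s -> s <= 1 -> 1 - s ^+ k <= k%:R * (1 - s).
Proof.
move=> s0 s1; rewrite one_subX mulrC ler_wpM2r ?subr_ge0 //.
apply: (@le_trans _ _ (\sum_(i < k) 1)).
  by apply: ler_sum => i _; exact: exprn_ile1.
by rewrite sumr_const card_ord.
Qed.
End PowerBounds.

Section ProdIneq.
Variable R : realDomainType.

Lemma prodrB_ge_sum k (a b : 'I_k -> R) :
  (forall j, 0 <= a j) -> (forall j, a j <= b j) ->
  \sum_(j < k) \prod_(j' < k) (if j' == j then b j' - a j' else a j')
    <= \prod_(j < k) b j - \prod_(j < k) a j.
Proof.
elim: k a b => [|k IH] a b a0 ab; first by rewrite big_ord0 !big_ord0 subrr.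
have lift_eq (j' j : 'I_k) : (lift ord0 j' == lift ord0 j) = (j' == j).
  exact: (inj_eq (@lift_inj _ ord0)).
rewrite big_ord_recl !(big_ord_recl k) /=.
under [X in _ + X]eq_bigr => j _ do
  (rewrite big_ord_recl /=; under eq_bigr => i _ do rewrite lift_eq).
rewrite -mulr_sumr.
have := IH (a \o lift ord0) (b \o lift ord0) (fun j => a0 _) (fun j => ab _).
set S := \sum_(j < k) _.
set Pb := \prod_(j < k) (b \o _) _; set Pa := \prod_(j < k) (a \o _) _.
have S0 : 0 <= S.
  apply: sumr_ge0 => j _; apply: prodr_ge0 => j' _.
  by case: ifP => _; rewrite /= ?subr_ge0 ?a0 ?ab.
have Pa0 : 0 <= Pa by apply: prodr_ge0 => j _; exact: a0.
have a00 := a0 ord0; have ab0 := ab ord0.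
rewrite /= => IHab; nra.
Qed.
End ProdIneq.

Definition vsum {R : nmodType} {n : nat} (x : 'cV[R]_n) : R := \sum_(i < n) x i ord0.

Definition nneg_cV {R : numDomainType} {n : nat} (x : 'cV[R]_n) :=
  forall i, 0 <= x i ord0.

Section ColumnSums.
Variables (R : pzRingType) (n : nat).
Implicit Types x y : 'cV[R]_n.

Lemma vsumD x y : vsum (x + y) = vsum x + vsum y.
Proof. by rewrite /vsum -big_split; apply: eq_bigr => i _; rewrite mxE. Qed.

Lemma vsumB x y : vsum (x - y) = vsum x - vsum y.
Proof. by rewrite /vsum -sumrB; apply: eq_bigr => i _; rewrite !mxE. Qed.

Lemma vsumZ a x : vsum (a *: x) = a * vsum x.
Proof. by rewrite /vsum mulr_sumr; apply: eq_bigr => i _; rewrite mxE. Qed.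

Lemma vsum0 : vsum (0 : 'cV[R]_n) = 0.
Proof. by rewrite /vsum big1 // => i _; rewrite mxE. Qed.

Lemma vsum_mulmx (A : 'M[R]_n) x :
  vsum (A *m x) = \sum_(l < n) (\sum_(i < n) A i l) * x l ord0.
Proof.
rewrite /vsum; under eq_bigr => i _ do rewrite mxE.
by rewrite exchange_big; apply: eq_bigr => l _; rewrite mulr_suml.
Qed.

End ColumnSums.

Lemma nneg_cV_subE {R : numDomainType} {n : nat} (x y : 'cV[R]_n) :
  nneg_cV (y - x) <-> forall i, x i ord0 <= y i ord0.
Proof. by split=> H i; move: (H i); rewrite !mxE subr_ge0. Qed.

Lemma nneg_le_vsum {R : numDomainType} {n : nat} (x : 'cV[R]_n) i :
  nneg_cV x -> x i ord0 <= vsum x.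
Proof. by move=> x0; rewrite /vsum (bigD1 i) //= lerDl sumr_ge0. Qed.

Section InversePositive.
Variables (R : realFieldType) (n : nat) (A : 'M[R]_n) (c : R).
Hypothesis A_ge0 : forall i l, 0 <= A i l.
Hypothesis A_colsum : forall l, \sum_(i < n) A i l <= c.
Hypothesis c_lt1 : c < 1.

Lemma nneg_mulmx z : nneg_cV z -> nneg_cV (A *m z).
Proof.
by move=> z0 i; rewrite mxE; apply: sumr_ge0 => l _; apply: mulr_ge0.
Qed.

Lemma nneg_of_sub_mulmx z : nneg_cV (z - A *m z) -> nneg_cV z.
Proof.
move=> Hz.
pose zm := \col_i Num.max 0 (- z i ord0).
have zm_ge0 : nneg_cV zm by move=> i; rewrite mxE le_max lexx.
have Nz_le_zm i : - z i ord0 <= zm i ord0 by rewrite mxE le_max lexx orbT.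
have zm_le_Azm i : zm i ord0 <= (A *m zm) i ord0.
  rewrite [zm i ord0]mxE ge_max nneg_mulmx //=.
  have : (A *m z) i ord0 <= z i ord0 by move: (Hz i); rewrite !mxE subr_ge0.
  have : - (A *m zm) i ord0 <= (A *m z) i ord0.
    rewrite !mxE -sumrN; apply: ler_sum => l _.
    by rewrite -mulrN ler_wpM2l // lerNl.
  lra.
have vsum_zm0 : vsum zm = 0.
  have S0 : 0 <= vsum zm by apply: sumr_ge0.
  have S_le : vsum zm <= c * vsum zm.
    apply: (le_trans (ler_sum _ (fun i _ => zm_le_Azm i))).
    rewrite -/(vsum _) vsum_mulmx mulr_sumr; apply: ler_sum => l _.
    by rewrite ler_wpM2r.
  by apply/le_anti; rewrite S0 andbT; have := c_lt1; nra.
move=> i; have := Nz_le_zm i.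
by rewrite (psumr_eq0P (fun i _ => zm_ge0 i) vsum_zm0) // lerNl oppr0.
Qed.

Lemma unitmx_sub1 : (A - 1%:M) \in unitmx.
Proof.
have ker0 z : (A - 1%:M) *m z = 0 -> nneg_cV z.
  move=> Az; apply: nneg_of_sub_mulmx => i.
  have -> : z - A *m z = - ((A - 1%:M) *m z) by rewrite mulmxBl mul1mx opprB.
  by rewrite Az oppr0 mxE.
rewrite -unitmx_tr -row_free_unit; apply: inj_row_free => u Hu.
have Hz : (A - 1%:M) *m u^T = 0 by rewrite -[_ *m _]trmxK trmx_mul trmxK Hu trmx0.
have u0 := ker0 _ Hz.
have uN : nneg_cV (- u^T) by apply: ker0; rewrite mulmxN Hz oppr0.
apply/matrixP => i j; rewrite ord1 mxE; apply/eqP; rewrite eq_le.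
by have := uN j; have := u0 j; rewrite !mxE; lra.
Qed.

End InversePositive.

Section Flattening.
Variables (R : realType) (n k : nat) (P : 'I_n -> {ffun 'I_k -> 'I_n} -> R).
Hypothesis P_ge0 : forall i s, 0 <= P i s.
Hypothesis P_colsum : forall s, \sum_(i < n) P i s = 1.

Lemma flat_apply_ge0 (ys : 'I_k -> 'cV[R]_n) :
  (forall j, nneg_cV (ys j)) -> nneg_cV (flat_apply P ys).
Proof.
move=> ys0 i; rewrite mxE; apply: sumr_ge0 => s _.
by apply: mulr_ge0 => //; apply: prodr_ge0 => j _; exact: ys0.
Qed.

Lemma vsum_flat_apply (ys : 'I_k -> 'cV[R]_n) :
  vsum (flat_apply P ys) = \prod_(j < k) vsum (ys j).
Proof.
rewrite /vsum; under eq_bigr => i _ do rewrite mxE.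
rewrite exchange_big /=.
under eq_bigr => s _ do rewrite -mulr_suml P_colsum mul1r.
by rewrite bigA_distr_bigA.
Qed.

Lemma flat_apply_slot (ys : 'I_k -> 'cV[R]_n) (j : 'I_k) (d : 'cV[R]_n) i :
  \sum_(l < n) d l ord0 *
    flat_apply P (fun j' => if j' == j then delta_mx l ord0 else ys j') i ord0
  = flat_apply P (fun j' => if j' == j then d else ys j') i ord0.
Proof.
rewrite mxE; under eq_bigr => l _ do rewrite mxE mulr_sumr.
rewrite exchange_big /=; apply: eq_bigr => s _.
have prod_slot (w : 'cV[R]_n) :
    \prod_(j' < k) (if j' == j then w else ys j') (s j') ord0
    = w (s j) ord0 * \prod_(j' < k | j' != j) ys j' (s j') ord0.
  rewrite (bigD1 j) //= eqxx; congr (_ * _).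
  by apply: eq_bigr => j' /negbTE ->.
rewrite prod_slot; under eq_bigr => l _ do rewrite prod_slot mxE.
rewrite (bigD1 (s j)) //= [X in _ + X]big1 => [|l /negbTE l_neq].
  by rewrite !eqxx mul1r addr0 mulrCA.
by rewrite [s j == l]eq_sym l_neq /= mul0r !mulr0.
Qed.

Lemma flat_apply_tangent (x y : 'cV[R]_n) i : nneg_cV x -> nneg_cV (y - x) ->
  \sum_(j < k) flat_apply P (fun j' => if j' == j then y - x else x) i ord0
    <= flat_apply P (fun _ => y) i ord0 - flat_apply P (fun _ => x) i ord0.
Proof.
move=> x0 yx; rewrite !mxE -sumrB.
under eq_bigr => j _ do rewrite mxE.
rewrite exchange_big /=; apply: ler_sum => s _.
rewrite -mulr_sumr -mulrBr ler_wpM2l //.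
have -> : \sum_(j < k) \prod_(j' < k) (if j' == j then y - x else x) (s j') ord0
    = \sum_(j < k) \prod_(j' < k)
        (if j' == j then y (s j') ord0 - x (s j') ord0 else x (s j') ord0).
  by apply: eq_bigr => j _; apply: eq_bigr => j' _; case: ifP; rewrite ?mxE.
apply: prodrB_ge_sum => j; first exact: x0.
by have := yx (s j); rewrite !mxE subr_ge0.
Qed.

End Flattening.

Section PageRank.
Variables (R : realType) (n k : nat) (P : 'I_n -> {ffun 'I_k -> 'I_n} -> R).
Variables (alpha : R) (v : 'cV[R]_n).
Hypothesis P_ge0 : forall i s, 0 <= P i s.
Hypothesis P_colsum : forall s, \sum_(i < n) P i s = 1.
Hypothesis alpha_ge0 : 0 <= alpha.
Hypothesis alpha_k_lt1 : alpha * k%:R < 1.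
Implicit Types x y z d : 'cV[R]_n.

Definition mlpr_g (x : 'cV[R]_n) : 'cV[R]_n :=
  alpha *: flat_apply P (fun _ => x) + (1 - alpha) *: v.

Definition mlpr_G (x : 'cV[R]_n) : 'M[R]_n :=
  \matrix_(i, l) (alpha * \sum_(j < k)
      flat_apply P (fun j' => if j' == j then delta_mx l ord0 else x) i ord0).

Lemma mlpr_fE x : mlpr_f P alpha v x = mlpr_g x - x. Proof. by []. Qed.

Lemma mlpr_JE x : mlpr_J P alpha x = mlpr_G x - 1%:M. Proof. by []. Qed.

Lemma mulmx_G x d i : (mlpr_G x *m d) i ord0
  = alpha * \sum_(j < k) flat_apply P (fun j' => if j' == j then d else x) i ord0.
Proof.
rewrite mxE; under eq_bigr => l _ do rewrite mxE -mulrA mulr_suml.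
rewrite -mulr_sumr exchange_big; congr (_ * _); apply: eq_bigr => j _.
by rewrite -flat_apply_slot; apply: eq_bigr => l _; rewrite mulrC.
Qed.

Lemma mlpr_G_ge0 x : nneg_cV x -> forall i l, 0 <= mlpr_G x i l.
Proof.
move=> x0 i l; rewrite mxE; apply: mulr_ge0 => //; apply: sumr_ge0 => j _.
by apply: flat_apply_ge0 => // j' i'; case: ifP => _ //; rewrite mxE ler0n.
Qed.

Lemma colsum_G x l : \sum_(i < n) mlpr_G x i l = alpha * k%:R * vsum x ^+ k.-1.
Proof.
under eq_bigr => i _ do rewrite mxE.
rewrite -mulr_sumr exchange_big /=.
under eq_bigr => j _ do rewrite -/(vsum _) vsum_flat_apply //.
have vsum_delta : vsum (delta_mx l ord0 : 'cV[R]_n) = 1.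
  rewrite /vsum (bigD1 l) //= mxE !eqxx big1 ?addr0 // => i /negbTE il.
  by rewrite mxE il.
have prod_slot (j : 'I_k) : \prod_(j' < k) vsum (if j' == j then delta_mx l ord0 else x)
    = vsum x ^+ k.-1.
  rewrite (bigD1 j) //= eqxx vsum_delta mul1r.
  rewrite (eq_bigr (fun _ => vsum x)) => [|j' /negbTE -> //].
  by rewrite prodr_const cardC1 card_ord.
under eq_bigr => j _ do rewrite prod_slot.
by rewrite sumr_const card_ord -mulrA mulr_natl.
Qed.

Lemma colsum_G_lt1 x : nneg_cV x -> vsum x <= 1 -> alpha * k%:R * vsum x ^+ k.-1 < 1.
Proof.
move=> x0 x1; apply: le_lt_trans alpha_k_lt1.
by rewrite ler_piMr ?mulr_ge0 // exprn_ile1 // sumr_ge0.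
Qed.

Let colsum_G_le x l : \sum_(i < n) mlpr_G x i l <= alpha * k%:R * vsum x ^+ k.-1.
Proof. by rewrite colsum_G. Qed.

Lemma mlpr_G_inverse_pos x z : nneg_cV x -> vsum x <= 1 ->
  nneg_cV (z - mlpr_G x *m z) -> nneg_cV z.
Proof.
move=> x0 x1.
exact: (nneg_of_sub_mulmx (mlpr_G_ge0 x0) (@colsum_G_le x) (colsum_G_lt1 x0 x1)).
Qed.

Lemma mlpr_J_unit x : nneg_cV x -> vsum x <= 1 -> mlpr_J P alpha x \in unitmx.
Proof.
move=> x0 x1.
exact: (unitmx_sub1 (mlpr_G_ge0 x0) (@colsum_G_le x) (colsum_G_lt1 x0 x1)).
Qed.

Lemma mlpr_g_tangent x y : nneg_cV x -> nneg_cV (y - x) ->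
  nneg_cV (mlpr_g y - mlpr_g x - mlpr_G x *m (y - x)).
Proof.
move=> x0 yx i.
have := flat_apply_tangent P_ge0 i x0 yx; rewrite -subr_ge0 => /(mulr_ge0 alpha_ge0).
rewrite [(mlpr_g y - mlpr_g x - _) i ord0]mxE [(mlpr_g y - _) i ord0]mxE.
rewrite [(- mlpr_g x) i ord0]mxE [(- (_ *m _)) i ord0]mxE mulmx_G /mlpr_g.
move: (\sum_(j < k) _) (flat_apply P (fun _ => y)) (flat_apply P (fun _ => x)) => S Fy Fx.
rewrite !mxE; lra.
Qed.

Lemma vsum_mulmx_G x d :
  vsum (mlpr_G x *m d) = alpha * k%:R * vsum x ^+ k.-1 * vsum d.
Proof. by rewrite vsum_mulmx mulr_sumr; apply: eq_bigr => l _; rewrite colsum_G. Qed.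

Lemma vsum_mlpr_f x :
  vsum (mlpr_f P alpha v x) = alpha * vsum x ^+ k + (1 - alpha) * vsum v - vsum x.
Proof.
by rewrite mlpr_fE vsumB vsumD !vsumZ vsum_flat_apply // prodr_const card_ord.
Qed.

Definition newton_step x := x - invmx (mlpr_J P alpha x) *m mlpr_f P alpha v x.

Lemma newton_step_linearized x : nneg_cV x -> vsum x <= 1 ->
  newton_step x = mlpr_g x + mlpr_G x *m (newton_step x - x).
Proof.
move=> x0 x1.
have Jd : mlpr_J P alpha x *m (newton_step x - x) = - mlpr_f P alpha v x.
  by rewrite /newton_step addrC addKr mulmxN mulKVmx // mlpr_J_unit.
move: Jd; rewrite mlpr_JE mulmxBl mul1mx mlpr_fE => Jd.
by rewrite -[mlpr_G x *m _](subrK (newton_step x - x)) Jd opprB addrA !subrKC.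
Qed.

Lemma newton_step_incrE x : nneg_cV x -> vsum x <= 1 ->
  (newton_step x - x) - mlpr_G x *m (newton_step x - x) = mlpr_f P alpha v x.
Proof.
by move=> x0 x1; rewrite {1}(newton_step_linearized x0 x1) addrAC addrK.
Qed.

Lemma mlpr_f_newton_step x : nneg_cV x -> vsum x <= 1 ->
  mlpr_f P alpha v (newton_step x)
  = mlpr_g (newton_step x) - mlpr_g x - mlpr_G x *m (newton_step x - x).
Proof.
by move=> x0 x1; rewrite mlpr_fE {2}(newton_step_linearized x0 x1) opprD addrA.
Qed.

Definition mlpr_subsol x :=
  [/\ nneg_cV x, vsum x <= 1 & nneg_cV (mlpr_f P alpha v x)].

Lemma newton_step_ge x : mlpr_subsol x -> nneg_cV (newton_step x - x).
Proof.
by case=> x0 x1 fx0; apply: (mlpr_G_inverse_pos x0 x1); rewrite newton_step_incrE.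
Qed.

Lemma mlpr_f_le_newton_step x i : mlpr_subsol x ->
  mlpr_f P alpha v x i ord0 <= newton_step x i ord0 - x i ord0.
Proof.
move=> sx; have [x0 x1 _] := sx.
have := nneg_mulmx (mlpr_G_ge0 x0) (newton_step_ge sx) i.
rewrite -(newton_step_incrE x0 x1).
move: (mlpr_G x *m (newton_step x - x)) => Gd; move: (newton_step x) => x'.
by rewrite !mxE; lra.
Qed.

Hypothesis v_sum : vsum v = 1.

Lemma vsum_newton_step_le1 x : mlpr_subsol x -> vsum (newton_step x) <= 1.
Proof.
move=> sx; have [x0 x1 _] := sx.
have := congr1 vsum (newton_step_incrE x0 x1).
rewrite vsumB vsum_mulmx_G vsum_mlpr_f v_sum mulr1 vsumB.
(* With s = vsum x and c = alpha k s^(k-1):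
   (1 - c) vsum (newton_step x) = 1 - c s - alpha (1 - s^k) <= 1 - c. *)
have := colsum_G_lt1 x0 x1.
have s0 : 0 <= vsum x by apply: sumr_ge0.
have := ler_wpM2l alpha_ge0 (one_subX_ge k s0 x1).
nra.
Qed.

Lemma newton_step_subsol x : mlpr_subsol x -> mlpr_subsol (newton_step x).
Proof.
move=> sx; have [x0 x1 _] := sx; have d0 := newton_step_ge sx.
split; last by rewrite mlpr_f_newton_step //; apply: mlpr_g_tangent.
- by move=> i; apply: le_trans (x0 i) ((nneg_cV_subE _ _).1 d0 i).
- exact: vsum_newton_step_le1.
Qed.

Lemma newton_step_le_root x y : mlpr_subsol x -> mlpr_f P alpha v y = 0 ->
  nneg_cV (y - x) -> nneg_cV (y - newton_step x).
Proof.
move=> sx fy0 yx; have [x0 x1 _] := sx.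
apply: (mlpr_G_inverse_pos x0 x1).
have -> : y - newton_step x = (y - x) - (newton_step x - x).
  by rewrite (opprB (newton_step x)) subrKA.
rewrite mulmxBr => i.
have := mlpr_g_tangent x0 yx i.
have := congr1 (fun A : 'cV[R]_n => A i ord0) (newton_step_linearized x0 x1).
have := congr1 (fun A : 'cV[R]_n => A i ord0) fy0; rewrite mlpr_fE /=.
move: (mlpr_G x *m (y - x)) (mlpr_G x *m (newton_step x - x)) => A B.
move: (newton_step x) (mlpr_g x) (mlpr_g y) => x' gx gy.
by rewrite !mxE; lra.
Qed.

Lemma root_vsum_eq1 y : nneg_cV y -> vsum y <= 1 -> mlpr_f P alpha v y = 0 ->
  vsum y = 1.
Proof.
move=> y0 y1 fy0; have s0 : 0 <= vsum y by apply: sumr_ge0.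
have := vsum_mlpr_f y; rewrite fy0 vsum0 v_sum mulr1.
have := ler_wpM2l alpha_ge0 (one_subX_le k s0 y1).
move=> tangent root; apply/le_anti; rewrite y1 /=; have := alpha_k_lt1; nra.
Qed.

Hypothesis v_ge0 : nneg_cV v.
Hypothesis alpha_le1 : alpha <= 1.

Lemma mlpr_subsol0 : mlpr_subsol 0.
Proof.
split; [by move=> i; rewrite mxE | by rewrite vsum0 |].
move=> i; rewrite mlpr_fE subr0 /mlpr_g.
have : nneg_cV (flat_apply P (fun _ => 0 : 'cV[R]_n)).
  by apply: flat_apply_ge0 => // j i'; rewrite mxE.
move: (flat_apply P _) => F /(_ i) F0.
by rewrite !mxE addr_ge0 ?mulr_ge0 ?subr_ge0.
Qed.

Lemma newton_subsol t : mlpr_subsol (newton P alpha v t).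
Proof. by elim: t => [|t IH]; [exact: mlpr_subsol0 | exact: newton_step_subsol]. Qed.

Lemma newton_J_unit t : mlpr_J P alpha (newton P alpha v t) \in unitmx.
Proof. by have [x0 x1 _] := newton_subsol t; exact: mlpr_J_unit. Qed.

Lemma newton_incr t : nneg_cV (newton P alpha v t.+1 - newton P alpha v t).
Proof. exact: newton_step_ge (newton_subsol t). Qed.

Lemma newton_le_root y t : nneg_cV y -> mlpr_f P alpha v y = 0 ->
  nneg_cV (y - newton P alpha v t).
Proof.
move=> y0 fy0; elim: t => [|t IH]; first by rewrite subr0.
exact: newton_step_le_root (newton_subsol t) fy0 IH.
Qed.

Lemma mlpr_f_coord x i : mlpr_f P alpha v x i ord0 =
  alpha * (\sum_s P i s * \prod_(j < k) x (s j) ord0) + (1 - alpha) * v i ord0 - x i ord0.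
Proof. by rewrite !mxE. Qed.

Lemma mlpr_f_cvg (xs : nat -> 'cV[R]_n) x :
  (forall i, (fun t => xs t i ord0) @ \oo --> x i ord0) ->
  forall i, (fun t => mlpr_f P alpha v (xs t) i ord0) @ \oo --> mlpr_f P alpha v x i ord0.
Proof.
move=> xs_cvg i; under eq_cvg do rewrite mlpr_f_coord.
rewrite mlpr_f_coord; apply: cvgB; last exact: xs_cvg.
apply: cvgD; last exact: cvg_cst.
apply: cvgM; first exact: cvg_cst.
apply: cvg_big => //; first exact: add_continuous.
move=> s _; apply: cvgM; first exact: cvg_cst.
apply: cvg_big => //; first exact: mul_continuous.
Qed.

Definition newton_lim : 'cV[R]_n :=
  \col_i sup (range (fun t => newton P alpha v t i ord0)).

Lemma newton_cvg i :
  (fun t => newton P alpha v t i ord0) @ \oo --> newton_lim i ord0.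
Proof.
rewrite mxE; apply: nondecreasing_cvgn.
  by apply/nondecreasing_seqP => t; apply/(nneg_cV_subE _ _).1/newton_incr.
exists 1 => _ [t _ <-]; have [x0 x1 _] := newton_subsol t.
exact: le_trans (nneg_le_vsum i x0) x1.
Qed.

Lemma newton_lim_nneg : nneg_cV newton_lim.
Proof.
move=> i; apply: (ler_cvg_to (cvg_cst 0) (newton_cvg (i := i))); apply: nearW => t.
by have [x0 _ _] := newton_subsol t.
Qed.

Lemma mlpr_f_newton_lim : mlpr_f P alpha v newton_lim = 0.
Proof.
apply/colP => i; rewrite [RHS]mxE.
have f_cvg := mlpr_f_cvg newton_cvg (i := i).
have step_cvg0 : (fun t => newton P alpha v t.+1 i ord0 - newton P alpha v t i ord0)
    @ \oo --> (0 : R).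
  rewrite -(subrr (newton_lim i ord0)); apply: cvgB; last exact: newton_cvg.
  by rewrite (cvg_shiftS (fun t => newton P alpha v t i ord0)); exact: newton_cvg.
have f_cvg0 : (fun t => mlpr_f P alpha v (newton P alpha v t) i ord0) @ \oo --> (0 : R).
  apply: (squeeze_cvgr _ (cvg_cst 0) step_cvg0); apply: nearW => t.
  have sx := newton_subsol t; have [_ _ fx0] := sx.
  by rewrite fx0 mlpr_f_le_newton_step.
exact: cvg_unique f_cvg f_cvg0.
Qed.

Lemma newton_lim_stochastic : stochastic newton_lim.
Proof.
have x0 := newton_lim_nneg.
have vsum_cvg : (fun t => vsum (newton P alpha v t)) @ \oo --> vsum newton_lim.
  by apply: cvg_big => //; [exact: add_continuous | move=> i _; exact: newton_cvg].
have x1 : vsum newton_lim <= 1.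
  apply: (ler_cvg_to vsum_cvg (cvg_cst (1 : R))); apply: nearW => t.
  by have [_ x1 _] := newton_subsol t.
by split; last exact: root_vsum_eq1 x0 x1 mlpr_f_newton_lim.
Qed.

Lemma newton_lim_unique y : stochastic y -> mlpr_f P alpha v y = 0 -> y = newton_lim.
Proof.
move=> [y0 y1] fy0.
have lim_le_y i : newton_lim i ord0 <= y i ord0.
  apply: (ler_cvg_to (newton_cvg (i := i)) (cvg_cst _)); apply: nearW => t.
  exact: (nneg_cV_subE _ _).1 (newton_le_root t y0 fy0) i.
have sum0 : \sum_(i < n) (y i ord0 - newton_lim i ord0) = 0.
  by rewrite sumrB y1 newton_lim_stochastic.2 subrr.
apply/colP => i; apply/eqP; rewrite -subr_eq0; apply/eqP.
by apply: (psumr_eq0P _ sum0) => // j _; rewrite subr_ge0.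
Qed.

End PageRank.

Theorem theorem3p2 (R : realType) (m n : nat) (hm : (2 <= m)%N) (hn : (1 <= n)%N)
  (P : 'I_n -> {ffun 'I_m.-1 -> 'I_n} -> R) (v : 'cV[R]_n) (alpha : R) :
  transition_tensor P -> stochastic v ->
  0 <= alpha -> alpha < 1 -> alpha < ((m - 1)%N%:R)^-1 ->
  (forall t, mlpr_J P alpha (newton P alpha v t) \in unitmx) /\
  exists x : 'cV[R]_n,
    [/\ stochastic x, mlpr_f P alpha v x = 0,
        (forall y : 'cV[R]_n, stochastic y -> mlpr_f P alpha v y = 0 -> y = x) &
        (forall i : 'I_n, (fun t : nat => newton P alpha v t i ord0) @ \oo --> (x i ord0 : R))].
Proof.
(* hn is implied by stochastic v. *)
move=> [P_ge0 P_colsum] [v_ge0 v_sum] alpha_ge0 alpha_lt1 alpha_lt_inv.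
have alpha_k_lt1 : alpha * (m.-1)%:R < 1.
  have m1_gt0 : 0 < (m.-1)%:R :> R by rewrite ltr0n -subn1 subn_gt0.
  rewrite subn1 in alpha_lt_inv.
  by rewrite -[X in _ < X](mulVf (lt0r_neq0 m1_gt0)) ltr_pM2r.
have alpha_le1 := ltW alpha_lt1.
split; first exact: newton_J_unit.
exists (newton_lim P alpha v); split.
- exact: newton_lim_stochastic.
- exact: mlpr_f_newton_lim.
- exact: newton_lim_unique.
- exact: newton_cvg.
Qed.
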